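(* Let $X$ be a bounded anti-linear operator on $H^2(\mathbb{D})$, let $S\in\mathcal{B}(H^2(\mathbb{D}))$ be a unilateral shift, and let $U$ be a unitary on $H^2(\mathbb{D})$ with $S=U^*M_zU$ (e.g. $Uf_n=z^n$ where $\{f_n\}$ is an orthonormal basis with $Sf_n=f_{n+1}$). Then $XM_z=SX$ if and only if there exists $\theta\in H^\infty(\mathbb{D})$ such that $X=U^*M_\theta J_{H^2(\mathbb{D})}$.
   Context: $H^2(\mathbb{D})$ is the Hardy space of the unit disc; $M_z$, $M_\theta$ are multiplication operators; $H^\infty(\mathbb{D})$ is the algebra of bounded analytic functions; $J_{H^2(\mathbb{D})}(\sum a_nz^n)=\sum\bar a_nz^n$. A unilateral shift on $H^2(\mathbb{D})$ is an operator $S$ for which there is an orthonormal basis $\{f_n\}_{n\in\mathbb{Z}_+}$ with $Sf_n=f_{n+1}$ for all $n$. *)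

(* H^2(D) is modelled through Taylor coefficients:
   f = sum a_n z^n  <->  a : nat -> C with sum |a_n|^2 < oo. *)
From Stdlib Require Import Reals.
From Coquelicot Require Import Coquelicot.
Open Scope R_scope.

Definition seqC := nat -> C.

Definition inH2 (a : seqC) : Prop := ex_series (fun n => (Cmod (a n)) ^ 2).

Definition H2norm (a : seqC) : R := sqrt (Series (fun n => (Cmod (a n)) ^ 2)).

Definition H2inner (a b : seqC) : C :=
  (Series (fun n => Re (Cmult (a n) (Cconj (b n)))),
   Series (fun n => Im (Cmult (a n) (Cconj (b n))))).

Definition addS (a b : seqC) : seqC := fun n => Cplus (a n) (b n).
Definition scalS (c : C) (a : seqC) : seqC := fun n => Cmult c (a n).

(* an operator on H^2 is a map seqC -> seqC, considered on H^2 only *)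
Definition maps_H2 (T : seqC -> seqC) : Prop := forall a, inH2 a -> inH2 (T a).

Definition bounded_op (T : seqC -> seqC) : Prop :=
  maps_H2 T /\ exists K : R, forall a, inH2 a -> H2norm (T a) <= K * H2norm a.

Definition linear_op (T : seqC -> seqC) : Prop :=
  (forall a b, inH2 a -> inH2 b -> T (addS a b) = addS (T a) (T b)) /\
  (forall c a, inH2 a -> T (scalS c a) = scalS c (T a)).

Definition antilinear_op (T : seqC -> seqC) : Prop :=
  (forall a b, inH2 a -> inH2 b -> T (addS a b) = addS (T a) (T b)) /\
  (forall c a, inH2 a -> T (scalS c a) = scalS (Cconj c) (T a)).

Definition bounded_linear (T : seqC -> seqC) : Prop := bounded_op T /\ linear_op T.
Definition bounded_antilinear (T : seqC -> seqC) : Prop := bounded_op T /\ antilinear_op T.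

Definition is_adjoint (U Ustar : seqC -> seqC) : Prop :=
  maps_H2 Ustar /\
  forall a b, inH2 a -> inH2 b -> H2inner (U a) b = H2inner a (Ustar b).

Definition unitary (U Ustar : seqC -> seqC) : Prop :=
  bounded_linear U /\ is_adjoint U Ustar /\
  (forall a, inH2 a -> U (Ustar a) = a) /\
  (forall a, inH2 a -> Ustar (U a) = a).

Definition orthonormal_basis (f : nat -> seqC) : Prop :=
  (forall n, inH2 (f n)) /\
  (forall n m, H2inner (f n) (f m) = (if Nat.eqb n m then RtoC 1 else RtoC 0)) /\
  (forall a, inH2 a -> (forall n, H2inner a (f n) = RtoC 0) -> a = (fun _ => RtoC 0)).

Definition unilateral_shift (Sh : seqC -> seqC) : Prop :=
  bounded_linear Sh /\ exists f, orthonormal_basis f /\ forall n, Sh (f n) = f (Datatypes.S n).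

(* M_z : multiplication by z, i.e. shift of coefficients *)
Definition Mz (a : seqC) : seqC :=
  fun n => match n with O => RtoC 0 | Datatypes.S k => a k end.

Definition JH2 (a : seqC) : seqC := fun n => Cconj (a n).

(* theta in H^infty(D), given by its Taylor coefficients t: the power series
   converges on the open unit disc and its sum is bounded there *)
Definition Hinf (t : seqC) : Prop :=
  (forall z : C, Cmod z < 1 -> exists l : C, is_series (fun n => Cmult (t n) (Cpow z n)) l) /\
  (exists M : R, forall (z l : C), Cmod z < 1 ->
      is_series (fun n => Cmult (t n) (Cpow z n)) l -> Cmod l <= M).

(* M_theta : multiplication by theta = Cauchy product of coefficient sequences *)
Definition Mtheta (t a : seqC) : seqC :=
  fun n => List.fold_right Cplus (RtoC 0) (List.map (fun k => Cmult (t k) (a (n - k)%nat)) (List.seq 0 (Datatypes.S n))).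

(* If X M_z = S X, then Y := U X J is a bounded linear operator commuting with M_z, and
   induction on coefficients shows that Y a is the Cauchy product of theta := Y 1 with a.
   For the kernel k_z = (conj z ^ n), the series sum_n (Y k_z)_n z^n sums to
   theta(z) / (1 - |z|^2) and is bounded by (|Y k_z|^2 + |k_z|^2) / 2, whence
   |theta(z)| <= (K^2 + 1) / 2.
   Conversely, for theta in H^infty and b in H^2, sample the dilations theta(r .) b(r .) and
   b(r .) at the N-th roots of unity: the discrete Parseval identity bounds the energy of the
   first N coefficients of (theta b)(r .) by M^2 |b|^2, up to tails that vanish as N grows,
   and letting r -> 1 puts theta b in H^2.  Since J and M_theta commute with M_z, the
   intertwining relation then follows. *)

From Stdlib Require Import Reals List Lia Lra FunctionalExtensionality.
From Coquelicot Require Import Coquelicot.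
Open Scope R_scope.

Fixpoint csum (f : nat -> C) (n : nat) : C :=
  match n with O => RtoC 0 | S m => Cplus (csum f m) (f m) end.

Fixpoint rsum (f : nat -> R) (n : nat) : R :=
  match n with O => 0 | S m => rsum f m + f m end.

Lemma C_eq (x y : C) : Re x = Re y -> Im x = Im y -> x = y.
Proof. destruct x, y; simpl; intros; subst; reflexivity. Qed.

Lemma fold_right_Cplus_acc (l : list C) (x : C) :
  fold_right Cplus x l = Cplus (fold_right Cplus (RtoC 0) l) x.
Proof. induction l as [|y l IH]; simpl; [ring|rewrite IH; ring]. Qed.

Lemma Mtheta_csum t a n :
  Mtheta t a n = csum (fun k => Cmult (t k) (a (n - k)%nat)) (S n).
Proof.
  unfold Mtheta. generalize (S n) as m; induction m as [|m IH]; [reflexivity|].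
  rewrite List.seq_S, map_app, fold_right_app; simpl.
  rewrite fold_right_Cplus_acc, IH. f_equal; ring.
Qed.

Lemma csum_S f n : csum f (S n) = Cplus (csum f n) (f n).
Proof. reflexivity. Qed.

Lemma csum_ext f g n : (forall k, (k < n)%nat -> f k = g k) -> csum f n = csum g n.
Proof. induction n; simpl; intros H; [reflexivity|rewrite IHn, H; auto; lia]. Qed.

Lemma rsum_ext f g n : (forall k, (k < n)%nat -> f k = g k) -> rsum f n = rsum g n.
Proof. induction n; simpl; intros H; [reflexivity|rewrite IHn, H; auto; lia]. Qed.

Lemma rsum_le f g n : (forall k, (k < n)%nat -> f k <= g k) -> rsum f n <= rsum g n.
Proof.
  induction n; simpl; intros H; [lra|].
  assert (f n <= g n) by (apply H; lia).
  assert (rsum f n <= rsum g n) by (apply IHn; intros; apply H; lia). lra.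
Qed.

Lemma rsum_const x n : rsum (fun _ => x) n = INR n * x.
Proof. induction n; simpl; [ring|rewrite IHn; destruct n; simpl; ring]. Qed.

Lemma rsum_ge0 f n : (forall k, (k < n)%nat -> 0 <= f k) -> 0 <= rsum f n.
Proof.
  intros H. replace 0 with (rsum (fun _ => 0) n) by (rewrite rsum_const; ring).
  apply rsum_le; auto.
Qed.

Lemma rsum_split f N j : rsum f (N + j) = rsum f N + rsum (fun i => f (N + i)%nat) j.
Proof. induction j; [rewrite Nat.add_0_r; simpl; ring|]. rewrite Nat.add_succ_r; simpl; rewrite IHj; ring. Qed.

Lemma csum_split f N j : csum f (N + j) = Cplus (csum f N) (csum (fun i => f (N + i)%nat) j).
Proof. induction j; [rewrite Nat.add_0_r; simpl; ring|]. rewrite Nat.add_succ_r; simpl; rewrite IHj; ring. Qed.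

Lemma rsum_le_mono f n m : (forall k, 0 <= f k) -> (n <= m)%nat -> rsum f n <= rsum f m.
Proof.
  intros Hf Hnm. replace m with (n + (m - n))%nat by lia. rewrite rsum_split.
  pose proof (rsum_ge0 (fun i => f (n + i)%nat) (m - n) (fun k _ => Hf _)). lra.
Qed.

Lemma rsum_term_le f n N : (forall k, 0 <= f k) -> (n < N)%nat -> f n <= rsum f N.
Proof.
  intros Hf Hn. eapply Rle_trans; [|apply (rsum_le_mono f (S n)); auto].
  simpl. pose proof (rsum_ge0 f n (fun k _ => Hf k)). lra.
Qed.

Lemma csum_plus f g n : csum (fun k => Cplus (f k) (g k)) n = Cplus (csum f n) (csum g n).
Proof. induction n; simpl; [apply C_eq; simpl; ring|rewrite IHn; ring]. Qed.

Lemma rsum_plus f g n : rsum (fun k => f k + g k) n = rsum f n + rsum g n.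
Proof. induction n; simpl; [ring|rewrite IHn; ring]. Qed.

Lemma csum_mult_l c f n : csum (fun k => Cmult c (f k)) n = Cmult c (csum f n).
Proof. induction n; simpl; [apply C_eq; simpl; ring|rewrite IHn; ring]. Qed.

Lemma csum_mult_r c f n : csum (fun k => Cmult (f k) c) n = Cmult (csum f n) c.
Proof. induction n; simpl; [apply C_eq; simpl; ring|rewrite IHn; ring]. Qed.

Lemma rsum_mult_l c f n : rsum (fun k => c * f k) n = c * rsum f n.
Proof. induction n; simpl; [ring|rewrite IHn; ring]. Qed.

Lemma Cconj_csum f n : Cconj (csum f n) = csum (fun k => Cconj (f k)) n.
Proof. induction n; simpl; [apply C_eq; simpl; ring|rewrite <- IHn; apply C_eq; simpl; ring]. Qed.

Lemma Re_csum f n : Re (csum f n) = rsum (fun k => Re (f k)) n.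
Proof. induction n; simpl; [reflexivity|rewrite <- IHn; reflexivity]. Qed.

Lemma Im_csum f n : Im (csum f n) = rsum (fun k => Im (f k)) n.
Proof. induction n; simpl; [reflexivity|rewrite <- IHn; reflexivity]. Qed.

Lemma RtoC_rsum f n : RtoC (rsum f n) = csum (fun k => RtoC (f k)) n.
Proof. induction n; simpl; [reflexivity|rewrite <- IHn; apply C_eq; simpl; ring]. Qed.

Lemma Cmod_csum_le f n : Cmod (csum f n) <= rsum (fun k => Cmod (f k)) n.
Proof.
  induction n; simpl; [rewrite Cmod_0; lra|].
  eapply Rle_trans; [apply Cmod_triangle|lra].
Qed.

Lemma csum_swap (f : nat -> nat -> C) n m :
  csum (fun i => csum (fun j => f i j) m) n = csum (fun j => csum (fun i => f i j) n) m.
Proof.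
  induction n; simpl.
  - induction m; simpl; [reflexivity|rewrite <- IHm; apply C_eq; simpl; ring].
  - rewrite IHn, <- csum_plus. reflexivity.
Qed.

Lemma csum_const c n : csum (fun _ => c) n = Cmult (RtoC (INR n)) c.
Proof.
  induction n; cbn [csum]; [apply C_eq; simpl; ring|].
  rewrite IHn, S_INR. apply C_eq; simpl; ring.
Qed.

Lemma csum_delta f n i : (i < n)%nat ->
  csum (fun k => if Nat.eqb k i then f k else RtoC 0) n = f i.
Proof.
  induction n; intros Hi; [lia|]; simpl.
  destruct (Nat.eq_dec i n) as [->|Hne].
  - rewrite Nat.eqb_refl, (csum_ext _ (fun _ => RtoC 0)), csum_const; [ring|].
    intros k Hk. destruct (Nat.eqb_spec k n); [lia|auto].
  - rewrite IHn by lia. destruct (Nat.eqb_spec n i); [lia|]. ring.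
Qed.

Lemma sum_n_rsum (f : nat -> R) n : sum_n f n = rsum f (S n).
Proof.
  induction n; [rewrite sum_O; simpl; ring|].
  rewrite sum_Sn, IHn. reflexivity.
Qed.

Lemma sum_n_csum (f : nat -> C) n : sum_n f n = csum f (S n).
Proof.
  induction n; [rewrite sum_O; simpl; ring|].
  rewrite sum_Sn, IHn. reflexivity.
Qed.

Lemma rsum_sum_f_R0 f n : rsum f (S n) = sum_f_R0 f n.
Proof. rewrite <- sum_n_rsum, sum_n_Reals. reflexivity. Qed.

Lemma Re_sum_n (f : nat -> C) n : Re (sum_n f n) = sum_n (fun k => Re (f k)) n.
Proof. rewrite sum_n_csum, sum_n_rsum. apply Re_csum. Qed.

Lemma Im_sum_n (f : nat -> C) n : Im (sum_n f n) = sum_n (fun k => Im (f k)) n.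
Proof. rewrite sum_n_csum, sum_n_rsum. apply Im_csum. Qed.

Lemma is_series_C (f : nat -> C) l :
  is_series f l <->
  is_series (fun n => Re (f n)) (Re l) /\ is_series (fun n => Im (f n)) (Im l).
Proof.
  unfold is_series. split.
  - intros H. pose proof (proj1 (filterlim_locally _ _) H) as H'.
    split; apply filterlim_locally; intros eps; specialize (H' eps);
      revert H'; apply filter_imp; intros n [H1 H2].
    + rewrite <- Re_sum_n; exact H1.
    + rewrite <- Im_sum_n; exact H2.
  - intros [H1 H2]. apply filterlim_locally. intros eps.
    pose proof (proj1 (filterlim_locally _ _) H1 eps) as h1.
    pose proof (proj1 (filterlim_locally _ _) H2 eps) as h2.
    generalize (filter_and _ _ h1 h2). apply filter_imp. intros n [g1 g2]. split.
    + change (ball (Re l) eps (Re (sum_n f n))). rewrite Re_sum_n; exact g1.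
    + change (ball (Im l) eps (Im (sum_n f n))). rewrite Im_sum_n; exact g2.
Qed.

Lemma ex_series_Cmod (f : nat -> C) :
  ex_series (fun n => Cmod (f n)) -> exists l, is_series f l.
Proof.
  intros H.
  assert (H0 : @ex_series C_AbsRing C_CompleteNormedModule f)
    by (apply (@ex_series_le C_AbsRing C_CompleteNormedModule) with (2 := H); intros n; apply Rle_refl).
  exact H0.
Qed.

Definition CSeries (f : nat -> C) : C :=
  (Series (fun n => Re (f n)), Series (fun n => Im (f n))).

Lemma is_series_CSeries f : ex_series (fun n => Cmod (f n)) -> is_series f (CSeries f).
Proof.
  intros H. destruct (ex_series_Cmod f H) as [l Hl].
  replace (CSeries f) with l; [exact Hl|].
  apply is_series_C in Hl as [h1 h2].
  apply C_eq; simpl; symmetry; apply is_series_unique; auto.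
Qed.

Lemma ex_series_Rabs_le (a b : nat -> R) :
  (forall n, Rabs (a n) <= b n) -> ex_series b -> ex_series a.
Proof. exact (@ex_series_le R_AbsRing R_CompleteNormedModule a b). Qed.

Lemma ex_series_Rabs_Re (u : nat -> C) :
  ex_series (fun n => Cmod (u n)) -> ex_series (fun n => Rabs (Re (u n))).
Proof. apply ex_series_Rabs_le. intros n. rewrite Rabs_Rabsolu. apply re_le_Cmod. Qed.

Lemma Rabs_Im_le_Cmod (c : C) : Rabs (Im c) <= Cmod c.
Proof.
  destruct c as [x y]. unfold Cmod; simpl. rewrite <- sqrt_Rsqr_abs.
  apply sqrt_le_1_alt. unfold Rsqr. nra.
Qed.

Lemma ex_series_Rabs_Im (u : nat -> C) :
  ex_series (fun n => Cmod (u n)) -> ex_series (fun n => Rabs (Im (u n))).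
Proof. apply ex_series_Rabs_le. intros n. rewrite Rabs_Rabsolu. apply Rabs_Im_le_Cmod. Qed.

Lemma Re_Mtheta u v n : Re (Mtheta u v n) =
  sum_f_R0 (fun k => Re (u k) * Re (v (n - k)%nat)) n -
  sum_f_R0 (fun k => Im (u k) * Im (v (n - k)%nat)) n.
Proof.
  rewrite Mtheta_csum, Re_csum, <- !rsum_sum_f_R0.
  generalize (S n) as m; induction m as [|m IH]; cbn [rsum]; [ring|].
  rewrite IH; simpl; unfold Re, Im; ring.
Qed.

Lemma Im_Mtheta u v n : Im (Mtheta u v n) =
  sum_f_R0 (fun k => Re (u k) * Im (v (n - k)%nat)) n +
  sum_f_R0 (fun k => Im (u k) * Re (v (n - k)%nat)) n.
Proof.
  rewrite Mtheta_csum, Im_csum, <- !rsum_sum_f_R0.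
  generalize (S n) as m; induction m as [|m IH]; cbn [rsum]; [ring|].
  rewrite IH; simpl; unfold Re, Im; ring.
Qed.

Lemma is_series_Mtheta u v lu lv :
  is_series u lu -> is_series v lv ->
  ex_series (fun n => Cmod (u n)) -> ex_series (fun n => Cmod (v n)) ->
  is_series (Mtheta u v) (Cmult lu lv).
Proof.
  intros Hu Hv Au Av.
  apply is_series_C in Hu as [Hu1 Hu2]. apply is_series_C in Hv as [Hv1 Hv2].
  pose proof (ex_series_Rabs_Re _ Au) as H. pose proof (ex_series_Rabs_Im _ Au) as H0.
  pose proof (ex_series_Rabs_Re _ Av) as H1. pose proof (ex_series_Rabs_Im _ Av) as H2.
  apply is_series_C. split.
  - eapply is_series_ext; [intros n; symmetry; apply Re_Mtheta|].
    replace (Re (Cmult lu lv)) with (plus (Re lu * Re lv) (opp (Im lu * Im lv)))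
      by (simpl; unfold plus, opp; simpl; unfold Re, Im; ring).
    exact (@is_series_minus R_AbsRing R_NormedModule _ _ _ _
             (is_series_mult _ _ _ _ Hu1 Hv1 H H1) (is_series_mult _ _ _ _ Hu2 Hv2 H0 H2)).
  - eapply is_series_ext; [intros n; symmetry; apply Im_Mtheta|].
    replace (Im (Cmult lu lv)) with (plus (Re lu * Im lv) (Im lu * Re lv))
      by (simpl; unfold plus; simpl; unfold Re, Im; ring).
    exact (@is_series_plus R_AbsRing R_NormedModule _ _ _ _
             (is_series_mult _ _ _ _ Hu1 Hv2 H H2) (is_series_mult _ _ _ _ Hu2 Hv1 H0 H1)).
Qed.

Lemma is_series_Cmod_sub_le (f : nat -> C) l P B N :
  is_series f l -> (forall M, (N <= M)%nat -> Cmod (Cminus (sum_n f M) P) <= B) ->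
  Cmod (Cminus l P) <= B.
Proof.
  intros H HB.
  assert (H1 : filterlim (fun M => plus (sum_n f M) (opp P)) eventually (locally (plus l (opp P)))).
  { eapply filterlim_comp_2; [exact H|apply filterlim_const|].
    exact (@filterlim_plus C_AbsRing C_NormedModule l (opp P)). }
  assert (H2 : filterlim (fun M => norm (plus (sum_n f M) (opp P))) eventually
                 (locally (norm (plus l (opp P))))).
  { eapply filterlim_comp; [exact H1|apply filterlim_norm]. }
  change (Rbar_le (Cmod (Cminus l P)) B).
  eapply is_lim_seq_le_loc with (v := fun _ => B); [|exact H2|apply is_lim_seq_const].
  exists N; exact HB.
Qed.

Lemma rsum_le_Series (f : nat -> R) N :
  (forall k, 0 <= f k) -> ex_series f -> rsum f N <= Series f.
Proof.
  intros Hf He. apply Series_correct in He.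
  change (Rbar_le (rsum f N) (Series f)).
  apply (is_lim_seq_le (fun _ => rsum f N) (fun m => sum_n f (m + N))).
  - intros m. rewrite sum_n_rsum. apply rsum_le_mono; auto; lia.
  - apply is_lim_seq_const.
  - apply (is_lim_seq_incr_n (sum_n f) N). exact He.
Qed.

Lemma Series_ge0 (f : nat -> R) : (forall k, 0 <= f k) -> ex_series f -> 0 <= Series f.
Proof.
  intros Hf He. eapply Rle_trans; [|apply (rsum_le_Series f 0 Hf He)]. simpl; lra.
Qed.

Lemma ex_series_of_rsum_bounded (f : nat -> R) B :
  (forall k, 0 <= f k) -> (forall N, rsum f N <= B) -> ex_series f.
Proof.
  intros Hf HB. destruct (ex_finite_lim_seq_incr (sum_n f) B) as [l Hl].
  - intros n. rewrite !sum_n_rsum. simpl. specialize (Hf (S n)). simpl in *. lra.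
  - intros n. rewrite sum_n_rsum. apply HB.
  - exists l. exact Hl.
Qed.

Lemma Cmod_csum_sub_limit_le (f : nat -> C) l N :
  is_series f l -> ex_series (fun n => Cmod (f n)) ->
  Cmod (Cminus (csum f N) l) <= Series (fun n => Cmod (f n)) - rsum (fun n => Cmod (f n)) N.
Proof.
  intros H Ha. replace (Cminus (csum f N) l) with (Copp (Cminus l (csum f N))) by ring.
  rewrite Cmod_opp. apply (is_series_Cmod_sub_le f l _ _ N H).
  intros M HM. rewrite sum_n_csum. replace (S M) with (N + (S M - N))%nat by lia.
  rewrite csum_split.
  replace (Cminus (Cplus (csum f N) (csum (fun i => f (N + i)%nat) (S M - N))) (csum f N))
    with (csum (fun i => f (N + i)%nat) (S M - N)) by ring.
  eapply Rle_trans; [apply Cmod_csum_le|].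
  pose proof (rsum_le_Series (fun n => Cmod (f n)) (N + (S M - N)) (fun k => Cmod_ge_0 _) Ha).
  rewrite rsum_split in H0. lra.
Qed.

Lemma Series_sub_rsum_small (f : nat -> R) : ex_series f ->
  forall eta, 0 < eta -> exists N1, forall N, (N1 <= N)%nat -> Series f - rsum f N < eta.
Proof.
  intros He eta Heta. apply Series_correct in He.
  assert (Hlim : is_lim_seq (sum_n f) (Series f)) by exact He.
  destruct (proj2 (is_lim_seq_spec _ _) Hlim (mkposreal eta Heta)) as [N1 HN1].
  exists (S N1). intros [|N] HN; [lia|].
  specialize (HN1 N ltac:(lia)). simpl in HN1. rewrite sum_n_rsum in HN1.
  apply Rabs_lt_between in HN1. lra.
Qed.

Lemma ex_series_Cmod_Mtheta u v :
  ex_series (fun n => Cmod (u n)) -> ex_series (fun n => Cmod (v n)) ->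
  ex_series (fun n => Cmod (Mtheta u v n)).
Proof.
  intros [lu Hu] [lv Hv].
  assert (Au : ex_series (fun n => Rabs (Cmod (u n))))
    by (exists lu; eapply is_series_ext; [|exact Hu]; intros n; rewrite Rabs_pos_eq by apply Cmod_ge_0; reflexivity).
  assert (Av : ex_series (fun n => Rabs (Cmod (v n))))
    by (exists lv; eapply is_series_ext; [|exact Hv]; intros n; rewrite Rabs_pos_eq by apply Cmod_ge_0; reflexivity).
  apply ex_series_Rabs_le with (2 := ex_intro _ _ (is_series_mult _ _ _ _ Hu Hv Au Av)).
  intros n. rewrite Rabs_pos_eq, Mtheta_csum, <- rsum_sum_f_R0 by apply Cmod_ge_0.
  eapply Rle_trans; [apply Cmod_csum_le|]. apply Req_le, rsum_ext. intros k _. apply Cmod_mult.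
Qed.

Lemma is_series_RtoC (a : nat -> R) l : is_series a l -> is_series (fun n => RtoC (a n)) (RtoC l).
Proof.
  intros H. apply is_series_C; split; [exact H|].
  change (is_lim_seq (sum_n (fun _ => 0)) 0).
  apply (is_lim_seq_ext (fun _ => 0)); [|apply is_lim_seq_const].
  intros n. rewrite sum_n_const. simpl. ring.
Qed.

Lemma ex_series_geom_scal B r : 0 <= r < 1 -> ex_series (fun n => B * r ^ n).
Proof.
  intros Hr. apply (@ex_series_scal R_AbsRing R_NormedModule B (fun n => r ^ n)).
  apply ex_series_geom. rewrite Rabs_pos_eq; lra.
Qed.

Lemma ex_series_Cmod_power (a : seqC) B z :
  (forall n, Cmod (a n) <= B) -> Cmod z < 1 ->
  ex_series (fun n => Cmod (Cmult (a n) (Cpow z n))).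
Proof.
  intros HB Hz. apply ex_series_Rabs_le with (2 := ex_series_geom_scal B (Cmod z) (conj (Cmod_ge_0 z) Hz)).
  intros n. rewrite Rabs_pos_eq, Cmod_mult, Cmod_pow by apply Cmod_ge_0.
  apply Rmult_le_compat_r; [apply pow_le, Cmod_ge_0|apply HB].
Qed.

Definition sq (a : seqC) (n : nat) : R := Cmod (a n) ^ 2.

Lemma sq_ge0 a n : 0 <= sq a n.
Proof. apply pow2_ge_0. Qed.

Lemma Series_sq_ge0 a : inH2 a -> 0 <= Series (sq a).
Proof. apply Series_ge0, sq_ge0. Qed.

Lemma H2norm_sq a : inH2 a -> H2norm a ^ 2 = Series (sq a).
Proof.
  intros H. unfold H2norm. rewrite <- Rsqr_pow2.
  apply Rsqr_sqrt, Series_sq_ge0, H.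
Qed.

Lemma H2norm_ge0 a : 0 <= H2norm a.
Proof. apply sqrt_pos. Qed.

Lemma Cmod_le_sqrt_Series_sq a n : inH2 a -> Cmod (a n) <= sqrt (Series (sq a)).
Proof.
  intros H. rewrite <- (sqrt_pow2 (Cmod (a n))) by apply Cmod_ge_0.
  apply sqrt_le_1_alt. eapply Rle_trans; [|apply (rsum_le_Series _ (S n) (sq_ge0 a) H)].
  apply (rsum_term_le (sq a)); [apply sq_ge0|lia].
Qed.

Lemma ex_series_Cmod_H2_power a z : inH2 a -> Cmod z < 1 ->
  ex_series (fun n => Cmod (Cmult (a n) (Cpow z n))).
Proof. intros H. apply ex_series_Cmod_power with (1 := fun n => Cmod_le_sqrt_Series_sq a n H). Qed.

Lemma inH2_Mz a : inH2 a -> inH2 (Mz a).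
Proof. intros H. apply ex_series_incr_1. exact H. Qed.

Definition bshift (a : seqC) : seqC := fun n => a (S n).

Lemma inH2_bshift a : inH2 a -> inH2 (bshift a).
Proof. intros H. apply (ex_series_incr_1 (fun n => Cmod (a n) ^ 2)). exact H. Qed.

Lemma inH2_J a : inH2 a -> inH2 (JH2 a).
Proof.
  intros H. unfold inH2, JH2. eapply ex_series_ext; [|exact H].
  intros n. rewrite Cmod_conj. reflexivity.
Qed.

Lemma inH2_scal c a : inH2 a -> inH2 (scalS c a).
Proof.
  intros H. unfold inH2, scalS.
  eapply ex_series_ext; [|apply (ex_series_scal_l (Cmod c ^ 2) _ H)].
  intros n. unfold scal; simpl; unfold mult; simpl. rewrite Cmod_mult. ring.
Qed.

Definition e0 : seqC := fun n => match n with O => RtoC 1 | _ => RtoC 0 end.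

Lemma inH2_e0 : inH2 e0.
Proof.
  apply ex_series_incr_1. eapply ex_series_ext; [|apply (ex_series_geom_scal 0 0); lra].
  intros n. simpl. rewrite Cmod_0. ring.
Qed.

Lemma Cmod_series_mult_le (w v : seqC) l : inH2 w -> inH2 v ->
  is_series (fun n => Cmult (w n) (v n)) l -> Cmod l <= (Series (sq w) + Series (sq v)) / 2.
Proof.
  intros Hw Hv Hl. replace l with (Cminus l (RtoC 0)) by ring.
  apply (is_series_Cmod_sub_le _ _ _ _ 0 Hl). intros M _.
  rewrite sum_n_csum. replace (Cminus _ (RtoC 0)) with (csum (fun n => Cmult (w n) (v n)) (S M)) by ring.
  eapply Rle_trans; [apply Cmod_csum_le|].
  apply Rle_trans with (rsum (fun n => / 2 * (sq w n + sq v n)) (S M)).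
  - apply rsum_le. intros n _. rewrite Cmod_mult. unfold sq.
    pose proof (Rle_0_sqr (Cmod (w n) - Cmod (v n))). unfold Rsqr in *. nra.
  - rewrite rsum_mult_l, rsum_plus.
    pose proof (rsum_le_Series (sq w) (S M) (sq_ge0 w) Hw).
    pose proof (rsum_le_Series (sq v) (S M) (sq_ge0 v) Hv). lra.
Qed.

Lemma bounded_op_nonneg T : bounded_op T ->
  exists K, 0 <= K /\ forall a, inH2 a -> H2norm (T a) <= K * H2norm a.
Proof.
  intros [_ [K HK]]. exists (Rmax K 0). split; [apply Rmax_r|].
  intros a Ha. eapply Rle_trans; [apply HK, Ha|].
  apply Rmult_le_compat_r; [apply H2norm_ge0|apply Rmax_l].
Qed.

Lemma Series_sq_le_of_H2norm_le T K a : 0 <= K -> maps_H2 T -> inH2 a ->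
  H2norm (T a) <= K * H2norm a -> Series (sq (T a)) <= K ^ 2 * Series (sq a).
Proof.
  intros HK HT Ha Hle. rewrite <- !H2norm_sq by auto.
  rewrite <- Rpow_mult_distr. apply pow_incr. split; [apply H2norm_ge0|exact Hle].
Qed.

Lemma e0_Mz_bshift_decomp a : a = addS (scalS (a 0%nat) e0) (Mz (bshift a)).
Proof. apply functional_extensionality. intros [|n]; unfold addS, scalS, e0, Mz, bshift; simpl; ring. Qed.

Lemma Mtheta_Cpow t b z n :
  Mtheta (fun n => Cmult (t n) (Cpow z n)) (fun n => Cmult (b n) (Cpow z n)) n =
  Cmult (Mtheta t b n) (Cpow z n).
Proof.
  rewrite !Mtheta_csum, <- csum_mult_r. apply csum_ext. intros j Hj.
  replace (Cpow z n) with (Cmult (Cpow z j) (Cpow z (n - j))) by (rewrite <- Cpow_add_r; f_equal; lia).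
  ring.
Qed.

Lemma is_series_sq_Cpow z : Cmod z < 1 ->
  is_series (sq (fun n => Cpow z n)) (/ (1 - Cmod z ^ 2)).
Proof.
  intros Hz. eapply is_series_ext; [|apply is_series_geom].
  - intros n. unfold sq. rewrite Cmod_pow, <- !pow_mult, Nat.mul_comm. reflexivity.
  - pose proof (Cmod_ge_0 z). rewrite Rabs_pos_eq by apply pow2_ge_0. simpl; nra.
Qed.

Lemma inH2_Cpow z : Cmod z < 1 -> inH2 (fun n => Cpow z n).
Proof. intros Hz. exists (/ (1 - Cmod z ^ 2)). apply is_series_sq_Cpow, Hz. Qed.

Lemma Cpow_Cconj_mult z n :
  Cmult (Cpow (Cconj z) n) (Cpow z n) = RtoC ((Cmod z ^ 2) ^ n).
Proof. rewrite <- Cpow_mult_l, RtoC_pow, Cmod2_conj. f_equal. ring. Qed.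

Section Commutant.

Variable Y : seqC -> seqC.
Hypothesis Ybl : bounded_linear Y.
Hypothesis Ycomm : forall a, inH2 a -> Y (Mz a) = Mz (Y a).

Lemma commutant_Mtheta_coef n : forall a, inH2 a -> Y a n = Mtheta (Y e0) a n.
Proof.
  destruct Ybl as [[Ymap _] [Yadd Yscal]].
  induction n as [|n IH]; intros a Ha; rewrite (e0_Mz_bshift_decomp a) at 1;
    rewrite Yadd, Yscal, Ycomm by auto using inH2_scal, inH2_e0, inH2_Mz, inH2_bshift;
    unfold addS, scalS, Mz; rewrite Mtheta_csum.
  - simpl. ring.
  - rewrite IH, Mtheta_csum by (apply inH2_bshift; auto).
    rewrite (csum_ext _ (fun k => Cmult (Y e0 k) (a (S n - k)%nat))).
    + cbn [csum]. rewrite Nat.sub_diag. ring.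
    + intros k Hk. unfold bshift. do 3 f_equal. lia.
Qed.

Lemma commutant_Mtheta a : inH2 a -> Y a = Mtheta (Y e0) a.
Proof. intros H. apply functional_extensionality. intros n. apply commutant_Mtheta_coef, H. Qed.

Lemma is_series_commutant_kernel z l : Cmod z < 1 ->
  is_series (fun n => Cmult (Y e0 n) (Cpow z n)) l ->
  is_series (fun n => Cmult (Y (fun m => Cpow (Cconj z) m) n) (Cpow z n))
            (Cmult l (RtoC (/ (1 - Cmod z ^ 2)))).
Proof.
  intros Hz Hl. pose proof (Cmod_ge_0 z).
  assert (Hzc : Cmod (Cconj z) < 1) by (rewrite Cmod_conj; exact Hz).
  assert (Hq : Rabs (Cmod z ^ 2) < 1) by (rewrite Rabs_pos_eq by apply pow2_ge_0; simpl; nra).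
  apply (is_series_ext (Mtheta (fun n => Cmult (Y e0 n) (Cpow z n)) (fun n => RtoC ((Cmod z ^ 2) ^ n)))).
  - intros n. rewrite (commutant_Mtheta _ (inH2_Cpow _ Hzc)), <- Mtheta_Cpow.
    f_equal. apply functional_extensionality. intros m. symmetry. apply Cpow_Cconj_mult.
  - apply is_series_Mtheta; [exact Hl|apply is_series_RtoC, is_series_geom, Hq| |].
    + apply ex_series_Cmod_H2_power; [apply (proj1 (proj1 Ybl)), inH2_e0|exact Hz].
    + eapply ex_series_ext; [|apply ex_series_geom, Hq].
      intros n. rewrite Cmod_R, Rabs_pos_eq by (apply pow_le, pow2_ge_0). reflexivity.
Qed.

Lemma commutant_symbol_Hinf : Hinf (Y e0).
Proof.
  destruct Ybl as [[Ymap _] _].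
  split.
  - intros z Hz. apply ex_series_Cmod, ex_series_Cmod_H2_power; [apply Ymap, inH2_e0|exact Hz].
  - destruct (bounded_op_nonneg Y (proj1 Ybl)) as [K [HK Ybd]].
    exists ((K ^ 2 + 1) / 2). intros z l Hz Hl.
    assert (Hs : 0 < / (1 - Cmod z ^ 2))
      by (pose proof (Cmod_ge_0 z); apply Rinv_0_lt_compat; simpl; nra).
    set (k := fun m => Cpow (Cconj z) m).
    assert (Hzc : Cmod (Cconj z) < 1) by (rewrite Cmod_conj; exact Hz).
    assert (Hk : Series (sq k) = / (1 - Cmod z ^ 2))
      by (rewrite <- (Cmod_conj z); apply is_series_unique, is_series_sq_Cpow, Hzc).
    pose proof (Cmod_series_mult_le _ _ _ (Ymap k (inH2_Cpow _ Hzc)) (inH2_Cpow _ Hz)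
                  (is_series_commutant_kernel z l Hz Hl)) as Hbound.
    pose proof (Series_sq_le_of_H2norm_le Y K k HK Ymap (inH2_Cpow _ Hzc)
                  (Ybd k (inH2_Cpow _ Hzc))) as HYbd.
    rewrite Hk in HYbd. rewrite (is_series_unique _ _ (is_series_sq_Cpow _ Hz)) in Hbound.
    rewrite Cmod_mult, Cmod_R, Rabs_pos_eq in Hbound by lra.
    apply Rmult_le_reg_r with (/ (1 - Cmod z ^ 2)); [exact Hs|]. lra.
Qed.

End Commutant.

Definition cis (x : R) : C := (cos x, sin x).

Lemma cis_pow x n : Cpow (cis x) n = cis (INR n * x).
Proof.
  induction n as [|n IH].
  - unfold cis. simpl. rewrite Rmult_0_l, cos_0, sin_0. reflexivity.
  - rewrite Cpow_S, IH. unfold cis. rewrite S_INR.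
    replace ((INR n + 1) * x) with (x + INR n * x) by ring.
    rewrite cos_plus, sin_plus. apply C_eq; simpl; ring.
Qed.

Lemma Cmod_cis x : Cmod (cis x) = 1.
Proof.
  unfold Cmod, cis. simpl. rewrite !Rmult_1_r, <- sqrt_1. f_equal.
  pose proof (sin2_cos2 x). unfold Rsqr in *. lra.
Qed.

Lemma csum_Cpow_eq0 (q : C) N : Cpow q N = RtoC 1 -> q <> RtoC 1 ->
  csum (fun k => Cpow q k) N = RtoC 0.
Proof.
  intros HqN Hq1.
  assert (Tel : forall n, Cmult (Cminus (RtoC 1) q) (csum (fun k => Cpow q k) n) =
                          Cminus (RtoC 1) (Cpow q n)).
  { induction n; [simpl; ring|]. cbn [csum]. rewrite Cmult_plus_distr_l, IHn. simpl. ring. }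
  assert (NZ : Cminus (RtoC 1) q <> RtoC 0).
  { intros Z. apply Hq1. replace q with (Cminus (RtoC 1) (Cminus (RtoC 1) q)) by ring. rewrite Z. ring. }
  specialize (Tel N). rewrite HqN in Tel.
  transitivity (Cmult (Cinv (Cminus (RtoC 1) q))
                      (Cmult (Cminus (RtoC 1) q) (csum (fun k => Cpow q k) N))).
  - field; auto.
  - rewrite Tel. ring.
Qed.

Section RootsOfUnity.

Variable N : nat.
Hypothesis HN : (1 <= N)%nat.

Definition unit_root : C := cis (2 * PI / INR N).

Lemma Cpow_unit_root_N : Cpow unit_root N = RtoC 1.
Proof.
  unfold unit_root. rewrite cis_pow.
  replace (INR N * (2 * PI / INR N)) with (2 * PI) by (field; apply not_0_INR; lia).
  unfold cis. rewrite cos_2PI, sin_2PI. reflexivity.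
Qed.

Lemma Cpow_unit_root_neq1 d : (0 < d < N)%nat -> Cpow unit_root d <> RtoC 1.
Proof.
  intros Hd E. unfold unit_root in E. rewrite cis_pow in E. injection E as E1 _.
  assert (0 < INR N) by (apply lt_0_INR; lia). pose proof PI_RGT_0.
  set (x := PI * (INR d / INR N)).
  replace (INR d * (2 * PI / INR N)) with (2 * x) in E1 by (unfold x; field; lra).
  assert (Hx : 0 < x < PI).
  { assert (0 < INR d / INR N < 1).
    { split; [apply Rdiv_lt_0_compat; [apply lt_0_INR; lia|lra]|].
      apply Rmult_lt_reg_r with (INR N); [lra|]. unfold Rdiv.
      rewrite Rmult_assoc, Rinv_l, Rmult_1_r, Rmult_1_l by lra. apply lt_INR; lia. }
    unfold x. split; [apply Rmult_lt_0_compat; lra|]. nra. }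
  rewrite cos_2a_sin in E1. pose proof (sin_gt_0 x (proj1 Hx) (proj2 Hx)). nra.
Qed.

Lemma Cmod_Cpow_unit_root k : Cmod (Cpow unit_root k) = 1.
Proof. rewrite Cmod_pow. unfold unit_root. rewrite Cmod_cis. apply pow1. Qed.

Lemma Cconj_Cpow_unit_root m : (m <= N)%nat -> Cconj (Cpow unit_root m) = Cpow unit_root (N - m).
Proof.
  intros Hm.
  assert (NZ : Cpow unit_root m <> RtoC 0).
  { intros Z. pose proof (Cmod_Cpow_unit_root m) as H1. rewrite Z, Cmod_0 in H1. lra. }
  assert (E1 : Cmult (Cpow unit_root m) (Cconj (Cpow unit_root m)) = RtoC 1).
  { rewrite <- Cmod2_conj, Cmod_Cpow_unit_root. apply C_eq; simpl; ring. }
  assert (E2 : Cmult (Cpow unit_root m) (Cpow unit_root (N - m)) = RtoC 1).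
  { rewrite <- Cpow_add_r. replace (m + (N - m))%nat with N by lia. apply Cpow_unit_root_N. }
  rewrite <- E2 in E1.
  transitivity (Cmult (Cinv (Cpow unit_root m)) (Cmult (Cpow unit_root m) (Cconj (Cpow unit_root m)))).
  - field; auto.
  - rewrite E1. field; auto.
Qed.

Lemma unit_root_orthogonality n m : (n < N)%nat -> (m < N)%nat ->
  csum (fun k => Cmult (Cpow (Cpow unit_root k) n) (Cconj (Cpow (Cpow unit_root k) m))) N =
  if Nat.eqb n m then RtoC (INR N) else RtoC 0.
Proof.
  intros Hn Hm.
  rewrite (csum_ext _ (fun k => Cpow (Cpow unit_root (n + (N - m))) k)).
  2:{ intros k _. rewrite <- !Cpow_mult_r, (Nat.mul_comm k n), (Nat.mul_comm k m), !Cpow_mult_r.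
      rewrite Cpow_conj, Cconj_Cpow_unit_root by lia.
      rewrite <- Cpow_mult_l, <- Cpow_add_r. reflexivity. }
  destruct (Nat.eqb_spec n m) as [->|Hnm].
  - replace (m + (N - m))%nat with N by lia. rewrite Cpow_unit_root_N.
    rewrite (csum_ext _ (fun _ => RtoC 1)) by (intros; apply Cpow_1_l).
    rewrite csum_const. ring.
  - apply csum_Cpow_eq0.
    + rewrite <- Cpow_mult_r, Nat.mul_comm, Cpow_mult_r, Cpow_unit_root_N. apply Cpow_1_l.
    + destruct (Nat.lt_ge_cases n m).
      * apply Cpow_unit_root_neq1. lia.
      * replace (n + (N - m))%nat with (N + (n - m))%nat by lia.
        rewrite Cpow_add_r, Cpow_unit_root_N, Cmult_1_l. apply Cpow_unit_root_neq1. lia.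
Qed.

Lemma discrete_parseval (c : nat -> C) :
  rsum (fun k => Cmod (csum (fun n => Cmult (c n) (Cpow (Cpow unit_root k) n)) N) ^ 2) N =
  INR N * rsum (sq c) N.
Proof.
  apply RtoC_inj. rewrite RtoC_rsum.
  rewrite (csum_ext _ (fun k => csum (fun n => csum (fun m =>
      Cmult (Cmult (c n) (Cconj (c m)))
            (Cmult (Cpow (Cpow unit_root k) n) (Cconj (Cpow (Cpow unit_root k) m)))) N) N)).
  2:{ intros k _. rewrite Cmod2_conj, Cconj_csum, <- csum_mult_r. apply csum_ext. intros n _.
      rewrite <- csum_mult_l. apply csum_ext. intros m _. rewrite Cmult_conj. ring. }
  rewrite csum_swap.
  rewrite (csum_ext _ (fun n => csum (fun m =>
      if Nat.eqb m n then Cmult (Cmult (c n) (Cconj (c m))) (RtoC (INR N)) else RtoC 0) N)).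
  2:{ intros n Hn. rewrite csum_swap. apply csum_ext. intros m Hm.
      rewrite csum_mult_l, unit_root_orthogonality by auto.
      destruct (Nat.eqb_spec n m), (Nat.eqb_spec m n); subst; try lia; ring. }
  rewrite RtoC_mult, RtoC_rsum, <- csum_mult_l. apply csum_ext. intros n Hn.
  rewrite csum_delta by auto. unfold sq. rewrite Cmod2_conj. ring.
Qed.

End RootsOfUnity.

Lemma is_lim_seq_0_bounded (u : nat -> R) : is_lim_seq u 0 -> exists B, forall n, Rabs (u n) <= B.
Proof.
  intros H. destruct (proj2 (is_lim_seq_spec _ _) H (mkposreal 1 Rlt_0_1)) as [N HN].
  exists (1 + rsum (fun k => Rabs (u k)) N). intros n.
  pose proof (rsum_ge0 (fun k => Rabs (u k)) N (fun k _ => Rabs_pos _)).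
  destruct (Nat.lt_ge_cases n N) as [Hn|Hn].
  - pose proof (rsum_term_le (fun k => Rabs (u k)) n N (fun k => Rabs_pos _) Hn). lra.
  - specialize (HN n Hn). simpl in HN. rewrite Rminus_0_r in HN. lra.
Qed.

Lemma Cmod_le_Rabs_Re_Im (c : C) : Cmod c <= Rabs (Re c) + Rabs (Im c).
Proof.
  destruct c as [x y]. unfold Cmod; simpl.
  pose proof (Rabs_pos x). pose proof (Rabs_pos y).
  rewrite <- (sqrt_Rsqr (Rabs x + Rabs y)) by lra.
  apply sqrt_le_1_alt. unfold Rsqr. rewrite !Rmult_1_r.
  pose proof (Rsqr_abs x). pose proof (Rsqr_abs y). unfold Rsqr in *. nra.
Qed.

Lemma is_series_terms_bounded (f : nat -> C) l : is_series f l -> exists B, forall n, Cmod (f n) <= B.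
Proof.
  intros H. apply is_series_C in H as [H1 H2].
  destruct (is_lim_seq_0_bounded _ (ex_series_lim_0 _ (ex_intro _ _ H1))) as [B1 HB1].
  destruct (is_lim_seq_0_bounded _ (ex_series_lim_0 _ (ex_intro _ _ H2))) as [B2 HB2].
  exists (B1 + B2). intros n. eapply Rle_trans; [apply Cmod_le_Rabs_Re_Im|].
  specialize (HB1 n); specialize (HB2 n). lra.
Qed.

Lemma Hinf_ex_series_dilation t rho : Hinf t -> 0 <= rho < 1 ->
  ex_series (fun n => Cmod (t n) * rho ^ n).
Proof.
  intros [Hconv _] Hr. set (r := (1 + rho) / 2).
  destruct (Hconv (RtoC r)) as [l Hl]; [rewrite Cmod_R, Rabs_pos_eq; unfold r; lra|].
  destruct (is_series_terms_bounded _ _ Hl) as [B HB].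
  assert (Hratio : 0 <= rho / r < 1).
  { unfold r. split; [apply Rdiv_le_0_compat; lra|].
    apply Rmult_lt_reg_r with ((1 + rho) / 2); [lra|].
    unfold Rdiv. rewrite Rmult_assoc, Rinv_l; lra. }
  apply ex_series_Rabs_le with (2 := ex_series_geom_scal B (rho / r) Hratio).
  intros n. specialize (HB n).
  rewrite Cmod_mult, Cmod_pow, Cmod_R, Rabs_pos_eq in HB by (unfold r; lra).
  assert (Hrn : 0 < r ^ n) by (apply pow_lt; unfold r; lra).
  rewrite Rabs_pos_eq by (apply Rmult_le_pos; [apply Cmod_ge_0|apply pow_le; lra]).
  unfold Rdiv. rewrite Rpow_mult_distr, pow_inv.
  replace (Cmod (t n) * rho ^ n) with (Cmod (t n) * r ^ n * (rho ^ n * / r ^ n)) by (field; lra).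
  apply Rmult_le_compat_r; auto.
  apply Rmult_le_pos; [apply pow_le; lra|apply Rlt_le, Rinv_0_lt_compat, Hrn].
Qed.

Lemma Hinf_bound_nonneg t : Hinf t -> exists M, 0 <= M /\
  forall z l, Cmod z < 1 -> is_series (fun n => Cmult (t n) (Cpow z n)) l -> Cmod l <= M.
Proof.
  intros [_ [M HM]]. exists (Rmax M 0). split; [apply Rmax_r|].
  intros z l Hz Hl. eapply Rle_trans; [eapply HM; eauto|apply Rmax_l].
Qed.

Lemma energy_le_of_samples N (HN : (1 <= N)%nat) (c d G B : nat -> C) M tau sig :
  0 <= M -> 0 <= tau -> 0 <= sig ->
  (forall k, (k < N)%nat -> Cmod (G k) <= M * Cmod (B k)) ->
  (forall k, (k < N)%nat ->
     Cmod (Cminus (csum (fun n => Cmult (c n) (Cpow (Cpow (unit_root N) k) n)) N) (G k)) <= tau) ->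
  (forall k, (k < N)%nat ->
     Cmod (Cminus (csum (fun n => Cmult (d n) (Cpow (Cpow (unit_root N) k) n)) N) (B k)) <= sig) ->
  let e := M * sig + tau in
  rsum (sq c) N <= (1 + e) * M ^ 2 * rsum (sq d) N + e + e ^ 2.
Proof.
  intros HM Ht Hs HGB HP HQ e.
  assert (He : 0 <= e) by (unfold e; nra).
  set (P := fun k => csum (fun n => Cmult (c n) (Cpow (Cpow (unit_root N) k) n)) N).
  set (Q := fun k => csum (fun n => Cmult (d n) (Cpow (Cpow (unit_root N) k) n)) N).
  assert (pointwise : forall k, (k < N)%nat ->
            Cmod (P k) ^ 2 <= (1 + e) * M ^ 2 * Cmod (Q k) ^ 2 + (e + e ^ 2)).
  { intros k Hk. specialize (HGB k Hk). specialize (HP k Hk). specialize (HQ k Hk).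
    fold (P k) in HP. fold (Q k) in HQ.
    assert (HPG : Cmod (P k) <= Cmod (Cminus (P k) (G k)) + Cmod (G k)).
    { replace (P k) with (Cplus (Cminus (P k) (G k)) (G k)) at 1 by ring. apply Cmod_triangle. }
    assert (HBQ : Cmod (B k) <= Cmod (Cminus (Q k) (B k)) + Cmod (Q k)).
    { replace (B k) with (Cplus (Copp (Cminus (Q k) (B k))) (Q k)) at 1 by ring.
      eapply Rle_trans; [apply Cmod_triangle|]. rewrite Cmod_opp. lra. }
    assert (HPQ : Cmod (P k) <= M * Cmod (Q k) + e).
    { unfold e. assert (M * Cmod (B k) <= M * (sig + Cmod (Q k))) by (apply Rmult_le_compat_l; lra).
      nra. }
    pose proof (Cmod_ge_0 (P k)). pose proof (Cmod_ge_0 (Q k)).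
    set (p := Cmod (P k)) in *. set (q := Cmod (Q k)) in *.
    assert (p * p <= (M * q + e) * (M * q + e)) by (apply Rmult_le_compat; lra).
    pose proof (Rle_0_sqr (M * q - 1)). unfold Rsqr in *. simpl. nra. }
  apply rsum_le in pointwise.
  rewrite rsum_plus, rsum_mult_l, rsum_const in pointwise. unfold P, Q in pointwise.
  rewrite !discrete_parseval in pointwise by exact HN.
  assert (0 < INR N) by (apply lt_0_INR; lia).
  apply Rmult_le_reg_l with (INR N); [assumption|nra].
Qed.

Lemma le_of_small_error A Cst : 0 <= Cst ->
  (forall eta, 0 < eta -> exists e, 0 <= e <= eta /\ A <= (1 + e) * Cst + e + e ^ 2) ->
  A <= Cst.
Proof.
  intros HC H. destruct (Rle_lt_dec A Cst) as [|Hlt]; [assumption|exfalso].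
  set (eta := Rmin 1 ((A - Cst) / (2 * (Cst + 2)))).
  assert (Heta : 0 < eta) by (apply Rmin_glb_lt; [lra|apply Rdiv_lt_0_compat; lra]).
  assert (Heta1 : eta <= 1) by apply Rmin_l.
  assert (Heta2 : eta <= (A - Cst) / (2 * (Cst + 2))) by apply Rmin_r.
  destruct (H eta Heta) as [e [[He0 He] HA]].
  assert (e * (2 * (Cst + 2)) <= A - Cst).
  { apply Rle_trans with ((A - Cst) / (2 * (Cst + 2)) * (2 * (Cst + 2))).
    - apply Rmult_le_compat_r; lra.
    - right. field. lra. }
  simpl in HA. nra.
Qed.

Lemma Bernoulli_pow x m : 0 <= x <= 1 -> 1 - INR m * x <= (1 - x) ^ m.
Proof.
  intros Hx. induction m as [|m IH]; [simpl; lra|]. rewrite S_INR. simpl.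
  assert (0 <= (1 - x) ^ m) by (apply pow_le; lra). pose proof (pos_INR m).
  assert ((1 - x) * (1 - INR m * x) <= (1 - x) * (1 - x) ^ m) by (apply Rmult_le_compat_l; lra).
  nra.
Qed.

Lemma le_of_pow_scaled_le A Cst m : 0 <= Cst ->
  (forall rho, 0 < rho < 1 -> rho ^ m * A <= Cst) -> A <= Cst.
Proof.
  intros HC H. destruct (Rle_lt_dec A Cst) as [|Hlt]; [assumption|exfalso].
  pose proof (pos_INR m).
  set (x := Rmin (1 / 2) ((A - Cst) / (2 * A * (INR m + 1)))).
  assert (Hx : 0 < x <= 1 / 2).
  { split; [apply Rmin_glb_lt; [lra|]|apply Rmin_l].
    apply Rdiv_lt_0_compat; [lra|]. apply Rmult_lt_0_compat; lra. }
  assert (Hxm : INR m * x * A <= (A - Cst) / 2).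
  { apply Rle_trans with (INR m * ((A - Cst) / (2 * A * (INR m + 1))) * A).
    - apply Rmult_le_compat_r; [lra|]. apply Rmult_le_compat_l; [lra|apply Rmin_r].
    - apply Rle_trans with ((A - Cst) / 2 * (INR m / (INR m + 1))).
      + right. field. lra.
      + rewrite <- (Rmult_1_r ((A - Cst) / 2)) at 2. apply Rmult_le_compat_l; [lra|].
        apply Rmult_le_reg_r with (INR m + 1); [lra|].
        unfold Rdiv. rewrite Rmult_assoc, Rinv_l; lra. }
  specialize (H (1 - x) ltac:(lra)).
  pose proof (Bernoulli_pow x m ltac:(lra)).
  assert ((1 - INR m * x) * A <= (1 - x) ^ m * A) by (apply Rmult_le_compat_r; lra).
  nra.
Qed.

Lemma Cmod_csum_unimodular_sub_le (f : seqC) w l N : Cmod w = 1 ->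
  is_series (fun n => Cmult (f n) (Cpow w n)) l -> ex_series (fun n => Cmod (f n)) ->
  Cmod (Cminus (csum (fun n => Cmult (f n) (Cpow w n)) N) l) <=
  Series (fun n => Cmod (f n)) - rsum (fun n => Cmod (f n)) N.
Proof.
  intros Hw Hl Hf.
  assert (E : forall n, Cmod (Cmult (f n) (Cpow w n)) = Cmod (f n))
    by (intros n; rewrite Cmod_mult, Cmod_pow, Hw, pow1; ring).
  rewrite <- (Series_ext _ _ E), <- (rsum_ext _ _ N (fun n _ => E n)).
  apply Cmod_csum_sub_limit_le; [exact Hl|]. eapply ex_series_ext; [|exact Hf]. intros n; auto.
Qed.

Definition dilate (r : R) (a : seqC) : seqC := fun n => Cmult (a n) (RtoC (r ^ n)).

Lemma dilate_Cpow r a w n :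
  Cmult (dilate r a n) (Cpow w n) = Cmult (a n) (Cpow (Cmult (RtoC r) w) n).
Proof. unfold dilate. rewrite Cpow_mult_l, RtoC_pow. ring. Qed.

Lemma dilate_eq_Cpow r a : dilate r a = fun n => Cmult (a n) (Cpow (RtoC r) n).
Proof. apply functional_extensionality. intros n. unfold dilate. rewrite RtoC_pow. reflexivity. Qed.

Lemma sq_dilate r a n : sq (dilate r a) n = (r ^ n) ^ 2 * sq a n.
Proof. unfold sq, dilate. rewrite Cmod_mult, Cmod_R, Rpow_mult_distr, pow2_abs. ring. Qed.

Lemma pow_le_1 r n : 0 <= r <= 1 -> r ^ n <= 1.
Proof. intros Hr. rewrite <- (pow1 n). apply pow_incr, Hr. Qed.

Lemma rsum_sq_dilate_le r a L : 0 <= r <= 1 -> rsum (sq (dilate r a)) L <= rsum (sq a) L.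
Proof.
  intros Hr. apply rsum_le. intros n _. rewrite sq_dilate.
  assert ((r ^ n) ^ 2 <= 1) by (rewrite <- (pow1 2); apply pow_incr; split; [apply pow_le; lra|apply pow_le_1; lra]).
  pose proof (sq_ge0 a n). nra.
Qed.

Lemma pow_rsum_sq_le_dilate r a L : 0 <= r <= 1 ->
  r ^ (2 * L) * rsum (sq a) L <= rsum (sq (dilate r a)) L.
Proof.
  intros Hr. rewrite <- rsum_mult_l. apply rsum_le. intros n Hn. rewrite sq_dilate.
  apply Rmult_le_compat_r; [apply sq_ge0|].
  rewrite <- pow_mult. replace (2 * L)%nat with (n * 2 + 2 * (L - n))%nat by lia.
  rewrite pow_add.
  assert (0 <= r ^ (n * 2)) by (apply pow_le; lra).
  assert (r ^ (2 * (L - n)) <= 1) by (apply pow_le_1; lra). nra.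
Qed.

Section Dilation.

Variables t b : seqC.
Hypothesis Ht : Hinf t.
Hypothesis Hb : inH2 b.
Variable M : R.
Hypothesis HM0 : 0 <= M.
Hypothesis HM : forall z l, Cmod z < 1 ->
  is_series (fun n => Cmult (t n) (Cpow z n)) l -> Cmod l <= M.
Variable rho : R.
Hypothesis Hrho : 0 < rho < 1.

Let c := dilate rho (Mtheta t b).
Let d := dilate rho b.

Lemma ex_series_Cmod_dilate_H2 a : inH2 a -> ex_series (fun n => Cmod (dilate rho a n)).
Proof.
  intros Ha. rewrite dilate_eq_Cpow. apply ex_series_Cmod_H2_power; [exact Ha|].
  rewrite Cmod_R, Rabs_pos_eq; lra.
Qed.

Lemma ex_series_Cmod_dilate_Hinf : ex_series (fun n => Cmod (dilate rho t n)).
Proof.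
  eapply ex_series_ext; [|apply (Hinf_ex_series_dilation t rho Ht); lra].
  intros n. unfold dilate. rewrite Cmod_mult, Cmod_R, Rabs_pos_eq by (apply pow_le; lra). reflexivity.
Qed.

Lemma ex_series_Cmod_dilate_Mtheta : ex_series (fun n => Cmod (c n)).
Proof.
  apply (ex_series_ext (fun n => Cmod (Mtheta (dilate rho t) (dilate rho b) n))).
  - intros n. unfold c. rewrite !dilate_eq_Cpow, Mtheta_Cpow. reflexivity.
  - apply ex_series_Cmod_Mtheta; [apply ex_series_Cmod_dilate_Hinf|apply ex_series_Cmod_dilate_H2, Hb].
Qed.

Lemma dilation_sampling_estimate N : (1 <= N)%nat ->
  let e := M * (Series (fun n => Cmod (d n)) - rsum (fun n => Cmod (d n)) N) +
           (Series (fun n => Cmod (c n)) - rsum (fun n => Cmod (c n)) N) in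
  rsum (sq c) N <= (1 + e) * M ^ 2 * rsum (sq d) N + e + e ^ 2.
Proof.
  intros HN. pose proof ex_series_Cmod_dilate_Mtheta as Hc.
  assert (Hd : ex_series (fun n => Cmod (d n))) by apply ex_series_Cmod_dilate_H2, Hb.
  set (w := fun k => Cpow (unit_root N) k).
  assert (Hw : forall k, Cmod (w k) = 1) by (intros k; apply Cmod_Cpow_unit_root).
  (* Sampling c and d at w k amounts to evaluating theta b and b at z k. *)
  set (z := fun k => Cmult (RtoC rho) (w k)).
  assert (Hz : forall k, Cmod (z k) < 1)
    by (intros k; unfold z; rewrite Cmod_mult, Hw, Cmod_R, Rabs_pos_eq; lra).
  assert (Ht_z : forall k, ex_series (fun n => Cmod (Cmult (t n) (Cpow (z k) n)))).
  { intros k. apply (ex_series_ext (fun n => Cmod (dilate rho t n))); [|apply ex_series_Cmod_dilate_Hinf].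
    intros n. unfold z. rewrite <- dilate_Cpow, Cmod_mult, Cmod_pow, Hw, pow1, Rmult_1_r. reflexivity. }
  assert (Hb_z : forall k, ex_series (fun n => Cmod (Cmult (b n) (Cpow (z k) n)))).
  { intros k. apply (ex_series_ext (fun n => Cmod (d n))); [|exact Hd].
    intros n. unfold z, d. rewrite <- dilate_Cpow, Cmod_mult, Cmod_pow, Hw, pow1, Rmult_1_r. reflexivity. }
  apply (energy_le_of_samples N HN c d
           (fun k => Cmult (CSeries (fun n => Cmult (t n) (Cpow (z k) n)))
                           (CSeries (fun n => Cmult (b n) (Cpow (z k) n))))
           (fun k => CSeries (fun n => Cmult (b n) (Cpow (z k) n)))).
  - exact HM0.
  - pose proof (rsum_le_Series _ N (fun k => Cmod_ge_0 (c k)) Hc). lra.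
  - pose proof (rsum_le_Series _ N (fun k => Cmod_ge_0 (d k)) Hd). lra.
  - intros k _. rewrite Cmod_mult. apply Rmult_le_compat_r; [apply Cmod_ge_0|].
    apply (HM (z k)); [apply Hz|apply is_series_CSeries, Ht_z].
  - intros k _. apply Cmod_csum_unimodular_sub_le; [apply Hw| |exact Hc].
    apply (is_series_ext (Mtheta (fun n => Cmult (t n) (Cpow (z k) n))
                                 (fun n => Cmult (b n) (Cpow (z k) n)))).
    + intros n. unfold c. rewrite Mtheta_Cpow, dilate_Cpow. reflexivity.
    + apply is_series_Mtheta; auto using is_series_CSeries.
  - intros k _. apply Cmod_csum_unimodular_sub_le; [apply Hw| |exact Hd].
    apply (is_series_ext (fun n => Cmult (b n) (Cpow (z k) n))).
    + intros n. unfold d. rewrite dilate_Cpow. reflexivity.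
    + apply is_series_CSeries, Hb_z.
Qed.

Lemma dilation_energy_le L : rsum (sq c) L <= M ^ 2 * Series (sq b).
Proof.
  pose proof ex_series_Cmod_dilate_Mtheta as Hc.
  assert (Hd : ex_series (fun n => Cmod (d n))) by apply ex_series_Cmod_dilate_H2, Hb.
  assert (HCst : 0 <= M ^ 2 * Series (sq b)) by (apply Rmult_le_pos; [apply pow2_ge_0|apply Series_sq_ge0, Hb]).
  apply le_of_small_error; [exact HCst|]. intros eta Heta.
  assert (Heta' : 0 < eta / (M + 1)) by (apply Rdiv_lt_0_compat; lra).
  destruct (Series_sub_rsum_small _ Hc _ Heta') as [N1 HN1].
  destruct (Series_sub_rsum_small _ Hd _ Heta') as [N2 HN2].
  set (N := S (N1 + N2 + L)).
  specialize (HN1 N ltac:(unfold N; lia)). specialize (HN2 N ltac:(unfold N; lia)).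
  pose proof (dilation_sampling_estimate N ltac:(unfold N; lia)) as Hest. cbv zeta in Hest.
  pose proof (rsum_le_Series _ N (fun k => Cmod_ge_0 (c k)) Hc).
  pose proof (rsum_le_Series _ N (fun k => Cmod_ge_0 (d k)) Hd).
  set (e := M * (Series (fun n => Cmod (d n)) - rsum (fun n => Cmod (d n)) N) +
             (Series (fun n => Cmod (c n)) - rsum (fun n => Cmod (c n)) N)) in Hest.
  assert (He0 : 0 <= e) by (unfold e; nra).
  exists e. split; [split; [exact He0|]|].
  - assert (M * (eta / (M + 1)) + eta / (M + 1) = eta) by (field; lra).
    unfold e. nra.
  - assert (Hd_b : rsum (sq d) N <= Series (sq b)).
    { eapply Rle_trans; [apply rsum_sq_dilate_le; lra|apply rsum_le_Series; [apply sq_ge0|exact Hb]]. }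
    assert (M ^ 2 * rsum (sq d) N <= M ^ 2 * Series (sq b)) by (apply Rmult_le_compat_l; [apply pow2_ge_0|exact Hd_b]).
    assert (rsum (sq c) L <= rsum (sq c) N) by (apply rsum_le_mono; [apply sq_ge0|unfold N; lia]).
    nra.
Qed.

End Dilation.

Lemma inH2_Mtheta t b : Hinf t -> inH2 b -> inH2 (Mtheta t b).
Proof.
  intros Ht Hb. destruct (Hinf_bound_nonneg t Ht) as [M [HM0 HM]].
  assert (HCst : 0 <= M ^ 2 * Series (sq b)) by (apply Rmult_le_pos; [apply pow2_ge_0|apply Series_sq_ge0, Hb]).
  apply (ex_series_of_rsum_bounded _ (M ^ 2 * Series (sq b)) (sq_ge0 _)). intros L.
  apply (le_of_pow_scaled_le _ _ (2 * L) HCst). intros rho Hrho.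
  eapply Rle_trans; [apply pow_rsum_sq_le_dilate; lra|].
  apply (dilation_energy_le t b Ht Hb M HM0 HM rho Hrho).
Qed.

Lemma JH2_involutive a : JH2 (JH2 a) = a.
Proof. apply functional_extensionality. intros n. apply Cconj_conj. Qed.

Lemma JH2_Mz a : JH2 (Mz a) = Mz (JH2 a).
Proof.
  apply functional_extensionality. intros [|m]; unfold JH2, Mz; [apply C_eq; simpl; ring|reflexivity].
Qed.

Lemma JH2_addS a b : JH2 (addS a b) = addS (JH2 a) (JH2 b).
Proof. apply functional_extensionality. intros n. apply Cplus_conj. Qed.

Lemma JH2_scalS c a : JH2 (scalS c a) = scalS (Cconj c) (JH2 a).
Proof. apply functional_extensionality. intros n. apply Cmult_conj. Qed.

Lemma H2norm_JH2 a : H2norm (JH2 a) = H2norm a.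
Proof. unfold H2norm, JH2. f_equal. apply Series_ext. intros n. rewrite Cmod_conj. reflexivity. Qed.

Lemma Mtheta_Mz t a : Mtheta t (Mz a) = Mz (Mtheta t a).
Proof.
  apply functional_extensionality. intros [|m]; rewrite !Mtheta_csum.
  - simpl. ring.
  - simpl Mz at 2. rewrite Mtheta_csum, csum_S, Nat.sub_diag.
    change (Mz a 0%nat) with (RtoC 0).
    rewrite (csum_ext _ (fun k => Cmult (t k) (a (m - k)%nat))); [ring|].
    intros k Hk. replace (S m - k)%nat with (S (m - k)) by lia. reflexivity.
Qed.

Lemma bounded_linear_comp_JH2 X : bounded_antilinear X -> bounded_linear (fun a => X (JH2 a)).
Proof.
  intros [[Xmap [K HK]] [Xadd Xscal]]. repeat split.
  - intros a Ha. apply Xmap, inH2_J, Ha.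
  - exists K. intros a Ha. rewrite <- (H2norm_JH2 a). apply HK, inH2_J, Ha.
  - intros a b Ha Hb. rewrite JH2_addS, Xadd; auto using inH2_J.
  - intros c a Ha. rewrite JH2_scalS, Xscal, Cconj_conj; auto using inH2_J.
Qed.

Lemma bounded_linear_comp U T : bounded_linear U -> bounded_linear T ->
  bounded_linear (fun a => U (T a)).
Proof.
  intros [Ubd [Uadd Uscal]] [Tbd [Tadd Tscal]].
  destruct (bounded_op_nonneg U Ubd) as [KU [HKU HU]].
  destruct (bounded_op_nonneg T Tbd) as [KT [HKT HT]].
  destruct Ubd as [Umap _], Tbd as [Tmap _]. repeat split.
  - intros a Ha. apply Umap, Tmap, Ha.
  - exists (KU * KT). intros a Ha. eapply Rle_trans; [apply HU, Tmap, Ha|].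
    rewrite Rmult_assoc. apply Rmult_le_compat_l; [exact HKU|apply HT, Ha].
  - intros a b Ha Hb. rewrite Tadd, Uadd; auto.
  - intros c a Ha. rewrite Tscal, Uscal; auto.
Qed.

Theorem proposition10p3 (X S U Ustar : seqC -> seqC) :
  bounded_antilinear X ->
  unilateral_shift S ->
  unitary U Ustar ->
  (forall a, inH2 a -> S a = Ustar (Mz (U a))) ->
  ((forall a, inH2 a -> X (Mz a) = S (X a)) <->
   exists t : seqC, Hinf t /\ forall a, inH2 a -> X a = Ustar (Mtheta t (JH2 a))).
Proof.
  intros HX _ [HU [_ [UUs UsU]]] HS.
  pose proof (proj1 (proj1 HX)) as Xmap. pose proof (proj1 (proj1 HU)) as Umap.
  split.
  - intros Hcomm. set (Y := fun a => U (X (JH2 a))).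
    assert (Ybl : bounded_linear Y)
      by exact (bounded_linear_comp U _ HU (bounded_linear_comp_JH2 X HX)).
    assert (Ycomm : forall a, inH2 a -> Y (Mz a) = Mz (Y a)).
    { intros a Ha. unfold Y. rewrite JH2_Mz, Hcomm, HS by auto using inH2_J.
      apply UUs, inH2_Mz, Umap, Xmap, inH2_J, Ha. }
    exists (Y e0). split; [apply commutant_symbol_Hinf; auto|].
    intros a Ha. rewrite <- commutant_Mtheta by auto using inH2_J.
    unfold Y. rewrite JH2_involutive, UsU by auto. reflexivity.
  - intros [t [Ht HXt]] a Ha.
    rewrite HXt, HS, HXt, UUs, JH2_Mz, Mtheta_Mz by auto using inH2_Mz, inH2_Mtheta, inH2_J.
    reflexivity.
Qed.
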